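(* Let $A$ be a binary $n\times m$ matrix with $R_{\mathbb{R}}(A)=R_{binary}(A)$. If $x_1,\dots,x_t$ are binary column vectors of length $n$ such that $R_{binary}(A|x_i)=R_{binary}(A)$ for all $1\le i\le t$, then $R_{\mathbb{R}}(A|x_1,\dots,x_t)=R_{\mathbb{R}}(A)$.
   Context: $R_{\mathbb{R}}$ is the usual rank over the reals. $R_{binary}(M)$ for a binary $p\times q$ matrix $M$ is the least $k$ with $M=UV$, $U\in\{0,1\}^{p\times k}$, $V\in\{0,1\}^{k\times q}$, ordinary arithmetic. $(A|x_1,\dots,x_t)$ denotes $A$ with the columns $x_1,\dots,x_t$ appended on the right. *)

From mathcomp Require Import all_boot all_order all_algebra.
From mathcomp Require Import Rstruct.
From Stdlib Require Import Rdefinitions.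
Set Implicit Arguments. Unset Strict Implicit. Unset Printing Implicit Defensive.
Import GRing.Theory.
Local Open Scope ring_scope.

(* Binary matrices are represented as boolean matrices; they are viewed as
   real 0/1 matrices through [realmx]. *)
Definition realmx (p q : nat) (M : 'M[bool]_(p, q)) : 'M[Rdefinitions.R]_(p, q) :=
  map_mx (fun b : bool => (b : nat)%:R) M.

Definition has_binary_factorization (p q k : nat) (M : 'M[bool]_(p, q)) : bool :=
  [exists U : 'M[bool]_(p, k), exists V : 'M[bool]_(k, q),
     realmx M == realmx U *m realmx V].

Lemma binary_factorization_exists (p q : nat) (M : 'M[bool]_(p, q)) :
  exists k : nat, has_binary_factorization k M.
Proof.
exists q; apply/existsP; exists M; apply/existsP; exists 1%:M.
apply/eqP; apply/matrixP => i j; rewrite !mxE.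
rewrite (bigD1 j) //= big1 ?addr0; last first.
  by move=> k /negbTE nkj; rewrite !mxE nkj /= mulr0.
by rewrite !mxE eqxx /= mulr1.
Qed.

Definition binary_rank (p q : nat) (M : 'M[bool]_(p, q)) : nat :=
  ex_minn (binary_factorization_exists M).

Definition real_rank (p q : nat) (M : 'M[bool]_(p, q)) : nat :=
  \rank (realmx M).

From Pilot Require Import Defs.
From mathcomp Require Import all_boot all_order all_algebra.
From mathcomp Require Import Rstruct.
Set Implicit Arguments. Unset Strict Implicit. Unset Printing Implicit Defensive.
Import GRing.Theory.
Local Open Scope ring_scope.

(* Write [(A | x_i) = U V] with [U] binary having [R_binary(A) = R_R(A)]
   columns.  The column space of [U] contains that of [A] and has no larger
   dimension, so the two coincide and [x_i] already lies in the column space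
   of [A].  Hence appending all the [x_i] does not raise the real rank.
   Column spaces are handled as row spaces of transposes. *)

Section ColumnSpaces.

Variable F : fieldType.

Lemma colspace_mulmx (n k m : nat) (U : 'M[F]_(n, k)) (V : 'M[F]_(k, m)) :
  ((U *m V)^T <= U^T)%MS.
Proof. by rewrite trmx_mul submxMl. Qed.

Lemma colspace_row_mx_factor (n m p k : nat) (A : 'M[F]_(n, m))
    (B : 'M[F]_(n, p)) (U : 'M[F]_(n, k)) (V : 'M[F]_(k, m + p)) :
  row_mx A B = U *m V -> (k <= \rank A)%N -> (B^T <= A^T)%MS.
Proof.
move=> defAB rkA.
have sABU : (col_mx A^T B^T <= U^T)%MS by rewrite -tr_row_mx defAB colspace_mulmx.
have sAU : (A^T <= U^T)%MS by apply: submx_trans sABU; rewrite -addsmxE addsmxSl.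
have sBU : (B^T <= U^T)%MS by apply: submx_trans sABU; rewrite -addsmxE addsmxSr.
have sUA : (U^T <= A^T)%MS.
  rewrite -(mxrank_leqif_sup sAU) eqn_leq mxrankS //= !mxrank_tr.
  exact: leq_trans (rank_leq_col U) rkA.
exact: submx_trans sBU sUA.
Qed.

Lemma colspace_col_subP (n m p : nat) (A : 'M[F]_(n, m)) (B : 'M[F]_(n, p)) :
  (forall i, ((col i B)^T <= A^T)%MS) -> (B^T <= A^T)%MS.
Proof. by move=> sBA; apply/row_subP => i; rewrite -tr_col. Qed.

Lemma mxrank_row_mx_colspace (n m p : nat) (A : 'M[F]_(n, m)) (B : 'M[F]_(n, p)) :
  (B^T <= A^T)%MS -> \rank (row_mx A B) = \rank A.
Proof.
by move=> sBA; rewrite -mxrank_tr tr_row_mx -addsmxE (addsmx_idPl sBA) mxrank_tr.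
Qed.

End ColumnSpaces.

Lemma realmx_row_mx (p q r : nat) (M : 'M[bool]_(p, q)) (N : 'M[bool]_(p, r)) :
  Defs.realmx (row_mx M N) = row_mx (Defs.realmx M) (Defs.realmx N).
Proof. exact: map_row_mx. Qed.

Lemma realmx_col (p q : nat) (j : 'I_q) (M : 'M[bool]_(p, q)) :
  Defs.realmx (col j M) = col j (Defs.realmx M).
Proof. exact: map_col. Qed.

Lemma binary_rank_factorization (p q : nat) (M : 'M[bool]_(p, q)) :
  exists (U : 'M[bool]_(p, binary_rank M)) (V : 'M[bool]_(binary_rank M, q)),
    Defs.realmx M = Defs.realmx U *m Defs.realmx V.
Proof.
rewrite /binary_rank; case: ex_minnP => k /existsP[U /existsP[V /eqP defM]] _.
by exists U, V.
Qed.

Theorem mainTheorem19 (n m t : nat) (A : 'M[bool]_(n, m)) (X : 'M[bool]_(n, t)) :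
  real_rank A = binary_rank A ->
  (forall i : 'I_t, binary_rank (row_mx A (col i X)) = binary_rank A) ->
  real_rank (row_mx A X) = real_rank A.
Proof.
move=> rkA brkAx.
rewrite /real_rank realmx_row_mx mxrank_row_mx_colspace //.
apply: colspace_col_subP => i; rewrite -realmx_col.
have [U [V]] := binary_rank_factorization (row_mx A (col i X)).
rewrite realmx_row_mx => /colspace_row_mx_factor sxA.
by apply: sxA; rewrite brkAx -rkA.
Qed.
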